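(* Let $G$ be a graph, $k\in\mathbb N$, and let $\mathcal F$ be a set of stars in $\vec S_k(G)$ all of which have finite interior. Let $X$ be a critical vertex set of $G$ with $|X|\ge k$. Then $\tau:=\{(A,B)\in\vec S_k(G): X\subseteq B\}$ is a principal $\mathcal F$-tangle of $S_k(G)$. In particular, if $\sigma\subseteq\vec S_k(G)$ is a star with $X\subseteq\mathrm{int}(\sigma)$, then $\sigma\subseteq\tau$.
   Context: Graphs may be infinite. A separation of $G$ is a set $\{A,B\}$ with $A,B\subseteq V(G)$, $A\cup B=V(G)$ and no edge of $G$ between $A\setminus B$ and $B\setminus A$; its order is $|A\cap B|$. $S_k(G)$ is the set of separations of order $<k$ and $\vec S_k(G)$ the set of their orientations $(A,B)$, $(B,A)$. Order: $(A,B)\le(C,D)$ iff $A\subseteq C$ and $B\supseteq D$. An orientation of $S_k(G)$ is a set containing exactly one orientation of each element; consistent if there are no distinct $\{A,B\},\{C,D\}\in S_k(G)$ with $(A,B)<(C,D)$, $(B,A)\in O$, $(C,D)\in O$; principal if for every set $Y$ of fewer than $k$ vertices it contains $(V(G)\setminus V(K),V(K)\cup Y)$ for some component $K$ of $G-Y$. A star is a set $\sigma$ of oriented finite-order separations, not containing $(V(G),V(G))$, with $(A,B)\le(D,C)$ for distinct $(A,B),(C,D)\in\sigma$; its interior is $\mathrm{int}(\sigma)=\bigcap_{(A,B)\in\sigma}B$. An $\mathcal F$-tangle of $S_k(G)$ is a consistent orientation of $S_k(G)$ having no element of $\mathcal F$ as a subset. A critical vertex set of $G$ is a finite set $X\subseteq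 V(G)$ such that infinitely many components $K$ of $G-X$ satisfy $N_G(K)=X$. *)

From HB Require Import structures.
From mathcomp Require Import all_boot.
From mathcomp Require Import boolp classical_sets cardinality.
From Stdlib Require Import Relations.
Set Implicit Arguments. Unset Strict Implicit. Unset Printing Implicit Defensive.
Local Open Scope classical_set_scope.

Record graph := Graph {
  vert :> Type;
  adj : vert -> vert -> Prop;
  adj_sym : forall x y, adj x y -> adj y x;
  adj_irr : forall x, ~ adj x x }.

Definition card_lt {T} (A : set T) (k : nat) : Prop :=
  exists n, (n < k)%N /\ card_eq A `I_n.

Section Sep.
Variable G : graph.
Notation V := (vert G).
Definition osep := (set V * set V)%type.

Definition is_sep (A B : set V) : Prop :=
  A `|` B = setT /\
  forall x y, (A `\` B) x -> (B `\` A) y -> ~ adj x y.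

Definition order_lt (A B : set V) (k : nat) : Prop := card_lt (A `&` B) k.

Definition vecS (k : nat) : set osep :=
  [set s | is_sep s.1 s.2 /\ order_lt s.1 s.2 k].

Definition vecS_fin : set osep :=
  [set s | is_sep s.1 s.2 /\ finite_set (s.1 `&` s.2)].

Definition sle (s t : osep) : Prop := s.1 `<=` t.1 /\ t.2 `<=` s.2.
Definition slt (s t : osep) : Prop := sle s t /\ s <> t.

Definition inv (s : osep) : osep := (s.2, s.1).

Definition usep_eq (s t : osep) : Prop := s = t \/ s = inv t.

(* O is an orientation of S_k(G): O consists of oriented separations in
   \vec S_k(G) and contains exactly one orientation of each {A,B} in S_k(G). *)
Definition orientation (k : nat) (O : set osep) : Prop :=
  O `<=` vecS k /\
  forall s, vecS k s -> (O s \/ O (inv s)) /\ (O s -> O (inv s) -> s = inv s).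

Definition consistent (k : nat) (O : set osep) : Prop :=
  ~ exists s t, vecS k s /\ vecS k t /\ ~ usep_eq s t /\
      slt s t /\ O (inv s) /\ O t.

Definition step_out (Y : set V) (u v : V) : Prop := adj u v /\ ~ Y u /\ ~ Y v.

Definition component (Y : set V) (K : set V) : Prop :=
  exists x, ~ Y x /\
    K = [set y | ~ Y y /\ clos_refl_trans V (step_out Y) x y].

Definition nbhd (K : set V) : set V :=
  [set y | ~ K y /\ exists x, K x /\ adj x y].

Definition principal (k : nat) (O : set osep) : Prop :=
  forall Y : set V, card_lt Y k ->
    exists K, component Y K /\ O (~` K, K `|` Y).

Definition star (sigma : set osep) : Prop :=
  sigma `<=` vecS_fin /\ ~ sigma (setT, setT) /\
  forall s t, sigma s -> sigma t -> s <> t -> sle s (inv t).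

Definition interior (sigma : set osep) : set V :=
  [set x | forall s, sigma s -> s.2 x].

Definition F_tangle (k : nat) (F : set (set osep)) (O : set osep) : Prop :=
  orientation k O /\ consistent k O /\ forall sigma, F sigma -> ~ sigma `<=` O.

Definition critical (X : set V) : Prop :=
  finite_set X /\ infinite_set [set K | component X K /\ nbhd K = X].

End Sep.

From Pilot Require Import Defs.
From mathcomp Require Import all_boot.
From mathcomp Require Import boolp classical_sets cardinality.
From Stdlib Require Import Relations.
Local Open Scope classical_set_scope.

(** Every separation [(A,B)] of order [< k] has a finite separator [A ∩ B],
    and since [X] is critical some component [K] of [G - X] with [N(K) = X]
    avoids it.  Then [K] lies on one side, say [K ⊆ A \ B], whence
    [X = N(K) ⊆ A]; as [|X| >= k], [X] never lies in both sides.  So [τ]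
    orients every separation, consistently.  For a star [σ] with finite
    interior, a component [K] avoiding [int(σ)] has a vertex outside some [B]
    with [(A,B) ∈ σ] and avoids [A ∩ B ⊆ int(σ)], so [X ⊆ A] and
    [(A,B) ∉ τ].  For principality, a component of [G - X] avoiding [Y] lies
    in a component [K] of [G - Y], and [X ⊆ K ∪ Y]. *)

Set Implicit Arguments. Unset Strict Implicit.

Arguments rt_trans {A R x y z}.
Arguments rt_step {A R x y}.
Arguments rt_refl {A R x}.
Arguments clos_rtn1_rt {A R x y}.
Arguments clos_rt_rtn1 {A R x y}.

Lemma card_lt_finite (T : Type) (X : set T) k : card_lt X k -> finite_set X.
Proof. by move=> [n [_ Xn]]; exists n. Qed.

Lemma card_lt_subset (T : Type) (X Y : set T) k :
  X `<=` Y -> card_lt Y k -> card_lt X k.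
Proof.
move=> XY [n [nk Yn]].
have [m Xm] : finite_set X by apply: sub_finite_set XY _; exists n.
exists m; split => //.
have mX : card_le `I_m X by move: (card_esym Xm); rewrite card_eq_le => /andP[].
have Yn' : card_le Y `I_n by move: Yn; rewrite card_eq_le => /andP[].
have := card_le_trans (card_le_trans mX (subset_card_le XY)) Yn'.
by rewrite card_le_II => mn; apply: leq_ltn_trans mn nk.
Qed.

Section Components.
Variable G : graph.
Notation V := (vert G).
Notation rt Y := (clos_refl_trans V (step_out Y)).

Lemma sep_sym (A B : set V) : is_sep A B -> is_sep B A.
Proof.
move=> [ABT ABsep]; split; first by rewrite setUC.
by move=> u v Bu Av uv; apply: (ABsep v u Av Bu); apply: adj_sym.
Qed.

Lemma sep_cover (A B : set V) x : is_sep A B -> A x \/ B x.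
Proof. by move=> [ABT _]; have : (A `|` B) x by rewrite ABT. Qed.

Lemma sep_adj_side (A B : set V) u v : is_sep A B -> (A `\` B) u -> adj u v -> A v.
Proof.
move=> sAB ABu uv; have [// | Bv] := sep_cover v sAB.
by apply: contrapT => nAv; apply: (sAB.2 u v ABu (conj Bv nAv) uv).
Qed.

Lemma vecS_inv k (s : osep G) : vecS k s -> vecS k (Defs.inv s).
Proof.
by case: s => A B [sAB ordAB]; split; [apply: sep_sym | rewrite /order_lt /= setIC].
Qed.

Definition component_at (Y : set V) (x : V) : set V :=
  [set y | ~ Y y /\ rt Y x y].

Lemma rt_step_out_sym (Y : set V) a b : rt Y a b -> rt Y b a.
Proof.
elim=> [x y [xy [Yx Yy]] | x | x y z _ IHxy _ IHyz].
- by apply: rt_step; split; [apply: adj_sym | split].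
- exact: rt_refl.
- exact: rt_trans IHyz IHxy.
Qed.

Lemma component_nonempty (Y K : set V) : component Y K -> exists x, K x.
Proof. by move=> [x [Yx ->]]; exists x; split => //; apply: rt_refl. Qed.

Lemma component_at_refl (Y : set V) x : ~ Y x -> component_at Y x x.
Proof. by split => //; apply: rt_refl. Qed.

Lemma component_eq_at (Y K : set V) z :
  component Y K -> K z -> K = component_at Y z.
Proof.
move=> [x [_ ->]] [_ xz]; apply/seteqP; split => y [Yy ry]; split => //.
  exact: rt_trans (rt_step_out_sym xz) ry.
exact: rt_trans xz ry.
Qed.

Lemma component_adj_closed (Y K : set V) u v :
  component Y K -> K u -> adj u v -> ~ Y v -> K v.
Proof.
move=> cK Ku uv Yv; have eK := component_eq_at cK Ku.
move: Ku; rewrite eK => -[Yu _].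
by split => //; apply: rt_step.
Qed.

Lemma component_ind (Y K P : set V) x :
  component Y K -> K x -> P x ->
  (forall u v, K u -> K v -> adj u v -> P u -> P v) -> K `<=` P.
Proof.
move=> cK Kx Px Pstep; rewrite (component_eq_at cK Kx) => y [Yy /clos_rt_rtn1 xy].
elim: xy Yy => [_ // | u v [uv [Yu _]] xu IH Yv].
have Ku : K u by rewrite (component_eq_at cK Kx); split => //; apply: clos_rtn1_rt.
exact: (Pstep u v Ku (component_adj_closed cK Ku uv Yv) uv (IH Yu)).
Qed.

Lemma component_sep (Y K : set V) : component Y K -> is_sep (~` K) (K `|` Y).
Proof.
move=> cK; split.
  by apply/seteqP; split => // v _; have [Kv|] := pselect (K v); [right; left | left].
move=> u v [Ku KYu] [_ /contrapT Kv] uv; apply: Ku.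
by apply: (component_adj_closed cK Kv (adj_sym uv)) => Yu; apply: KYu; right.
Qed.

Lemma component_sub_side (Y K A B : set V) x :
  is_sep A B -> component Y K -> K `<=` ~` (A `&` B) ->
  K x -> (A `\` B) x -> K `<=` A `\` B.
Proof.
move=> sAB cK KAB Kx ABx; apply: component_ind cK Kx ABx _ => u v _ Kv uv ABu.
have Av := sep_adj_side sAB ABu uv.
by split => // Bv; apply: (KAB v Kv).
Qed.

Lemma nbhd_sub_side (A B K : set V) : is_sep A B -> K `<=` A `\` B -> nbhd K `<=` A.
Proof.
by move=> sAB KAB v [_ [u [Ku uv]]]; apply: sep_adj_side sAB (KAB u Ku) uv.
Qed.

Lemma component_nbhd_side (Y K A B : set V) x :
  is_sep A B -> component Y K -> K `<=` ~` (A `&` B) ->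
  K x -> (A `\` B) x -> nbhd K `<=` A.
Proof.
by move=> sAB cK KAB Kx ABx; apply: nbhd_sub_side sAB (component_sub_side sAB cK KAB Kx ABx).
Qed.

(* Only finitely many components of [G - X] meet a finite set [Z]. *)
Lemma critical_component_avoiding (X Z : set V) : critical X -> finite_set Z ->
  exists K, [/\ component X K, nbhd K = X & K `<=` ~` Z].
Proof.
move=> [_ Xinf] Zfin; apply: contrapT => noK; apply: Xinf.
apply: sub_finite_set (finite_image (component_at X) Zfin) => K [cK NK].
have [z [Kz Zz]] : exists z, K z /\ Z z.
  apply: contrapT => noz; apply: noK; exists K; split => // z Kz Zz.
  by apply: noz; exists z.
by exists z => //; rewrite (component_eq_at cK Kz).
Qed.

Lemma star_sep_interior (sigma : set (osep G)) s :
  star sigma -> sigma s -> s.1 `&` s.2 `<=` interior sigma.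
Proof.
move=> [_ [_ sle_inv]] ss v [s1v s2v] t st.
have [<- // | st_neq] := pselect (s = t).
by have [+ _] := sle_inv s t ss st st_neq; apply.
Qed.

End Components.

Section CriticalTangle.
Variables (G : graph) (k : nat) (X : set G).
Hypothesis X_large : ~ card_lt X k.

Definition towards : set (osep G) := [set s | vecS k s /\ X `<=` s.2].

Lemma large_not_in_separator (A B : set G) :
  order_lt A B k -> X `<=` A -> X `<=` B -> False.
Proof. by move=> AB XA XB; apply/X_large/(card_lt_subset _ AB) => x Xx; split; auto. Qed.

Lemma towards_consistent : consistent k towards.
Proof.
move=> [s [t [_ [[_ t_ord] [_ [[[st1 _] _] [[_ Xs1] [_ Xt2]]]]]]]].
by apply: large_not_in_separator t_ord _ Xt2 => x /Xs1/st1.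
Qed.

Hypothesis X_critical : critical X.

Lemma towards_orientation : orientation k towards.
Proof.
split=> [s [] // | [A B] [sAB ordAB]]; split; last first.
  by move=> [_ XB] [_ XA]; case: (large_not_in_separator ordAB XA XB).
have [K [cK NK KAB]] := critical_component_avoiding X_critical (card_lt_finite ordAB).
have [x Kx] := component_nonempty cK.
have [Bx | nBx] := pselect (B x).
  have nAx : ~ A x by move=> Ax; apply: (KAB x Kx).
  have KBA : K `<=` ~` (B `&` A) by rewrite setIC.
  left; split => //=; rewrite -NK.
  exact: component_nbhd_side (sep_sym sAB) cK KBA Kx (conj Bx nAx).
have [Ax | //] := sep_cover x sAB.
right; split; first exact: vecS_inv.
by rewrite /= -NK; apply: component_nbhd_side sAB cK KAB Kx (conj Ax nBx).
Qed.

Lemma towards_no_star (sigma : set (osep G)) :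
  star sigma -> sigma `<=` vecS k -> finite_set (interior sigma) ->
  ~ sigma `<=` towards.
Proof.
move=> sstar svec sfin stow.
have [K [cK NK Kint]] := critical_component_avoiding X_critical sfin.
have [x Kx] := component_nonempty cK.
have [s ss s2x] : exists2 s, sigma s & ~ s.2 x.
  apply: contrapT => nos; apply: (Kint x Kx) => s ss.
  by apply: contrapT => s2x; apply: nos; exists s.
have [[sT ssep] sord] := svec s ss.
have [s1x | //] := sep_cover x (conj sT ssep).
have KAB : K `<=` ~` (s.1 `&` s.2).
  by move=> w Kw sw; apply: (Kint w Kw); apply: star_sep_interior sstar ss w sw.
apply: large_not_in_separator sord _ (stow s ss).2.
by rewrite -NK; apply: component_nbhd_side (conj sT ssep) cK KAB Kx (conj s1x s2x).
Qed.

Lemma towards_principal : principal k towards.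
Proof.
move=> Y Yk.
have [K' [cK' NK' K'Y]] := critical_component_avoiding X_critical (card_lt_finite Yk).
have [z K'z] := component_nonempty cK'.
have Yz : ~ Y z := K'Y z K'z.
pose K := component_at Y z.
have cK : component Y K by exists z.
have K'K : K' `<=` K.
  apply: component_ind cK' K'z (component_at_refl Yz) _ => u v _ K'v uv Ku.
  exact: component_adj_closed cK Ku uv (K'Y v K'v).
exists K; split => //; split; first split.
- exact: component_sep.
- by apply: card_lt_subset Yk => v [Kv [|]].
- move=> x Xx; have [Yx | Yx] := pselect (Y x); [by right | left].
  move: Xx; rewrite -NK' => -[_ [u [K'u ux]]].
  exact: component_adj_closed cK (K'K u K'u) ux Yx.
Qed.

End CriticalTangle.

Theorem lemma3p7 (G : graph) (k : nat) (F : set (set (osep G))) (X : set G) :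
  (forall sigma, F sigma ->
     star sigma /\ sigma `<=` @vecS G k /\ finite_set (interior sigma)) ->
  critical X -> ~ card_lt X k ->
  let tau := [set s | @vecS G k s /\ X `<=` s.2] in
  (F_tangle k F tau /\ principal k tau) /\
  (forall sigma, star sigma -> sigma `<=` @vecS G k ->
     X `<=` interior sigma -> sigma `<=` tau).
Proof.
move=> hF Xcrit Xlarge tau; split; first split; first split.
- exact: towards_orientation.
- split; first exact: towards_consistent.
  by move=> sigma /hF [sstar [svec sfin]]; apply: towards_no_star.
- exact: towards_principal.
- by move=> sigma _ svec Xint s ss; split; [apply: svec | move=> x /Xint; apply].
Qed.
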